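(* Let $\pi_k$ be a current policy, let $\pi$ be any policy, and let $\pi_{\mathrm{ref}}$ be a reference policy. Then $$J(\pi)-J(\pi_k)\;\ge\;\frac{1}{1-\gamma}\,\mathbb E_{(s,a)\sim d^{\pi_{\mathrm{ref}}}}\!\left[\frac{\pi(a\mid s)}{\pi_{\mathrm{ref}}(a\mid s)}A^{\pi_k}(s,a)\right]\;-\;\frac{2\gamma C^{\pi,\pi_k}}{(1-\gamma)^2}\,\mathbb E_{s\sim d^{\pi_{\mathrm{ref}}}}\big[\mathrm{TV}(\pi,\pi_{\mathrm{ref}})(s)\big],$$ where $C^{\pi,\pi_k}=\max_{s\in\mathcal S}\big|\mathbb E_{a\sim\pi(\cdot\mid s)}[A^{\pi_k}(s,a)]\big|$.
   Context: We work with an infinite-horizon discounted Markov decision process $(\mathcal S,\mathcal A,p,r,\rho_0,\gamma)$ with state space $\mathcal S$, action space $\mathcal A$, transition kernel $p(\cdot\mid s,a)$, reward $r:\mathcal S\times\mathcal A\to\mathbb R$, initial state distribution $\rho_0$, and discount $\gamma\in[0,1)$. A (stationary) policy $\pi$ maps each state $s$ to a distribution $\pi(\cdot\mid s)$ over actions. The objective is $J(\pi)=\mathbb E_{\tau\sim\pi}[\sum_{t=0}^\infty\gamma^t r(s_t,a_t)]$, where trajectories are generated by $s_0\sim\rho_0$, $a_t\sim\pi(\cdot\mid s_t)$, $s_{t+1}\sim p(\cdot\mid s_t,a_t)$. The normalized discounted state visitation distribution is $d^{\pi}(s)=(1-\gamma)\sum_{t=0}^\infty\gamma^t\,\mathbb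 P(s_t=s\mid\rho_0,\pi,p)$, and $d^{\pi}(s,a)=d^{\pi}(s)\pi(a\mid s)$ is the corresponding state-action distribution. $V^{\pi}(s)$ and $Q^{\pi}(s,a)$ are the usual discounted state and state-action value functions of $\pi$, and $A^{\pi}(s,a)=Q^{\pi}(s,a)-V^{\pi}(s)$ is the advantage function. $\mathrm{TV}(\pi,\pi')(s)$ is the total variation distance between $\pi(\cdot\mid s)$ and $\pi'(\cdot\mid s)$. *)

From HB Require Import structures.
From mathcomp Require Import all_boot all_order all_algebra.
From mathcomp Require Import all_classical all_reals all_analysis.
Set Implicit Arguments. Unset Strict Implicit. Unset Printing Implicit Defensive.
Import Order.TTheory GRing.Theory Num.Theory.
Import numFieldNormedType.Exports.
Local Open Scope ring_scope.
Local Open Scope classical_set_scope.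

Section MDP.
Variables (R : realType) (S A : finType).

Definition is_dist (T : finType) (mu : T -> R) :=
  (forall x, 0 <= mu x) /\ \sum_(x : T) mu x = 1.

(* pi : S -> A -> R, pi s a = pi(a | s) *)
Definition is_policy (pi : S -> A -> R) := forall s, is_dist (pi s).
(* p : S -> A -> S -> R, p s a s' = p(s' | s, a) *)
Definition is_kernel (p : S -> A -> S -> R) := forall s a, is_dist (p s a).

Definition rseries (u : nat -> R) : R := limn (series u).

Variables (p : S -> A -> S -> R) (r : S -> A -> R) (gamma : R).

Fixpoint stdist (pi : S -> A -> R) (mu : S -> R) (t : nat) : S -> R :=
  match t with
  | 0 => mu
  | t'.+1 => fun s' => \sum_(s : S) \sum_(a : A)
                 stdist pi mu t' s * pi s a * p s a s'
  end.

Definition exp_reward (pi : S -> A -> R) (mu : S -> R) (t : nat) : R :=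
  \sum_(s : S) \sum_(a : A) stdist pi mu t s * pi s a * r s a.

Definition Jret (rho0 : S -> R) (pi : S -> A -> R) : R :=
  rseries (fun t => gamma ^+ t * exp_reward pi rho0 t).

Definition dirac_s (s : S) : S -> R := fun s' => if s' == s then 1 else 0.

Definition Vf (pi : S -> A -> R) (s : S) : R :=
  rseries (fun t => gamma ^+ t * exp_reward pi (dirac_s s) t).

(* Q(s,a): a_0 = a fixed, s_1 ~ p(.|s,a), then follow pi *)
Definition Qf (pi : S -> A -> R) (s : S) (a : A) : R :=
  rseries (fun t => gamma ^+ t *
     (match t with 0 => r s a | t'.+1 => exp_reward pi (p s a) t' end)).

Definition Af (pi : S -> A -> R) (s : S) (a : A) : R := Qf pi s a - Vf pi s.

Definition dvis (rho0 : S -> R) (pi : S -> A -> R) (s : S) : R :=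
  (1 - gamma) * rseries (fun t => gamma ^+ t * stdist pi rho0 t s).

Definition TV (pi pi' : S -> A -> R) (s : S) : R :=
  2^-1 * \sum_(a : A) `| pi s a - pi' s a |.

End MDP.

From HB Require Import structures.
From mathcomp Require Import all_boot all_order all_algebra.
From mathcomp Require Import all_classical all_reals all_analysis.
From mathcomp Require Import ring lra.
Import Order.TTheory GRing.Theory Num.Theory.
Import numFieldNormedType.Exports.
Local Open Scope ring_scope.
Local Open Scope classical_set_scope.

(* The performance difference lemma, obtained from the Bellman equation for
   [Q^pik] and the flow equation [d^pi = (1 - gamma) rho0 + gamma P_pi^T d^pi],
   gives [(1 - gamma) (J pi - J pik) = E_{s ~ d^pi} [sum_a pi(a|s) A^pik(s,a)]].
   Evaluating this expectation under [d^piref] instead costs at most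
   [C * ||d^pi - d^piref||_1], and subtracting the two flow equations yields
   [(1 - gamma) ||d^pi - d^piref||_1 <= 2 gamma E_{s ~ d^piref} [TV(pi, piref)(s)]].
   Finally, the expectation under [d^piref] is the importance-weighted
   expectation over state-action pairs drawn from [d^piref]. *)

Set Implicit Arguments. Unset Strict Implicit. Unset Printing Implicit Defensive.

Lemma cvg_sum (R : realType) (I : finType) (u : I -> nat -> R) (l : I -> R) :
  (forall i, u i @ \oo --> l i) -> (fun n => \sum_i u i n) @ \oo --> \sum_i l i.
Proof. by move=> ul; apply: cvg_big => //; exact: add_continuous. Qed.

Section discounted_sum.
Variables (R : realType) (gamma : R).
Hypotheses (gamma_ge0 : 0 <= gamma) (gamma_lt1 : gamma < 1).

Definition dsum (u : nat -> R) : R := rseries (fun t => gamma ^+ t * u t).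

Lemma is_cvg_discounted (u : nat -> R) (M : R) : (forall t, `|u t| <= M) ->
  cvgn (series (fun t => gamma ^+ t * u t)).
Proof.
move=> uM; have M_ge0 : 0 <= M by apply: le_trans (uM 0%N).
apply: normed_cvg; apply: (@series_le_cvg _ _ (geometric M gamma)).
- by move=> n; exact: normr_ge0.
- by move=> n; rewrite /geometric /= mulr_ge0 ?exprn_ge0.
- move=> n /=; rewrite normrM ger0_norm ?exprn_ge0 // mulrC.
  by rewrite ler_wpM2r ?exprn_ge0.
- by apply: is_cvg_geometric_series; rewrite ger0_norm.
Qed.

Lemma dsum_sum (I : finType) (c : I -> R) (u : I -> nat -> R) (M : R) :
  (forall i t, `|u i t| <= M) ->
  dsum (fun t => \sum_i c i * u i t) = \sum_i c i * dsum (u i).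
Proof.
move=> uM; rewrite /dsum /rseries.
have -> : series (fun t => gamma ^+ t * \sum_i c i * u i t) =
    (fun n => \sum_i c i * series (fun t => gamma ^+ t * u i t) n).
  apply/funext => n; rewrite /series /=.
  under eq_bigr do rewrite mulr_sumr; rewrite exchange_big /=.
  by apply: eq_bigr => i _; rewrite mulr_sumr; apply: eq_bigr => t _; ring.
apply: cvg_lim => //; apply: cvg_sum => i.
by apply: cvgMl_tmp; exact: is_cvg_discounted (uM i).
Qed.

Lemma dsumS (u : nat -> R) (M : R) : (forall t, `|u t| <= M) ->
  dsum u = u 0%N + gamma * dsum (fun t => u t.+1).
Proof.
move=> uM; rewrite /dsum /rseries; apply: cvg_lim => //; rewrite -cvg_shiftS /=.
have -> : (fun n => series (fun t => gamma ^+ t * u t) n.+1) =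
    (fun n => u 0%N + gamma * series (fun t => gamma ^+ t * u t.+1) n).
  apply/funext => n; rewrite /series /= big_nat_recl // expr0 mul1r mulr_sumr.
  by congr (_ + _); apply: eq_bigr => t _; rewrite exprS mulrA.
apply: cvgD; first exact: cvg_cst.
by apply: cvgMl_tmp; exact: is_cvg_discounted (fun t => uM t.+1).
Qed.

Lemma dsum_ge0 (u : nat -> R) (M : R) : (forall t, `|u t| <= M) ->
  (forall t, 0 <= u t) -> 0 <= dsum u.
Proof.
move=> uM u_ge0; apply: limr_ge; first exact: is_cvg_discounted uM.
by near=> n; apply: sumr_ge0 => t _; rewrite mulr_ge0 ?exprn_ge0.
Unshelve. all: by end_near.
Qed.

End discounted_sum.

Lemma norm_dist_le1 (R : realType) (T : finType) (mu : T -> R) (x : T) :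
  is_dist mu -> `|mu x| <= 1.
Proof. by move=> [mu_ge0 <-]; rewrite ger0_norm // (bigD1 x) //= lerDl sumr_ge0. Qed.

Lemma sum_mul_dirac (R : realType) (S : finType) (f : S -> R) (s : S) :
  \sum_s0 f s0 * dirac_s R s0 s = f s.
Proof.
rewrite (bigD1 s) //= /dirac_s eqxx mulr1 big1 ?addr0 // => s0 s0_neq.
by rewrite eq_sym (negbTE s0_neq) mulr0.
Qed.

Lemma is_dist_dirac (R : realType) (S : finType) (s : S) : is_dist (dirac_s R s).
Proof.
split=> [x|]; first by rewrite /dirac_s; case: (x == s).
rewrite (bigD1 s) //= /dirac_s eqxx big1 ?addr0 // => x x_neq.
by rewrite (negbTE x_neq).
Qed.

Lemma ler_abs_sum_mul (R : realType) (I : finType) (x g : I -> R) (C : R) :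
  (forall i, `|g i| <= C) -> `|\sum_i x i * g i| <= C * \sum_i `|x i|.
Proof.
move=> gC; rewrite mulr_sumr; apply: le_trans (ler_norm_sum _ _ _) _.
apply: ler_sum => i _; rewrite normrM mulrC ler_wpM2r //.
Qed.

Lemma sum_importance_weight (R : realType) (I : finType) (q p f : I -> R) :
  (forall i, q i = 0 -> p i = 0) ->
  \sum_i q i * (p i / q i * f i) = \sum_i p i * f i.
Proof.
move=> q0p0; apply: eq_bigr => i _.
have [/[dup] qi0 /q0p0 ->|qi_neq0] := eqVneq (q i) 0; first by rewrite qi0 !mul0r.
by field.
Qed.

Section markov_chain.
Variables (R : realType) (S A : finType) (p : S -> A -> S -> R) (r : S -> A -> R).
Hypothesis p_kernel : is_kernel p.

Definition ptrans (f : S -> A -> R) (s s' : S) : R := \sum_a f s a * p s a s'.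

Definition rpol (pi : S -> A -> R) (s : S) : R := \sum_a pi s a * r s a.

Lemma is_dist_ptrans pi s : is_policy pi -> is_dist (ptrans pi s).
Proof.
move=> pi_policy; split=> [s'|].
  by apply: sumr_ge0 => a _; rewrite mulr_ge0 ?(pi_policy s).1 ?(p_kernel s a).1.
rewrite exchange_big /= -(pi_policy s).2; apply: eq_bigr => a _.
by rewrite -mulr_sumr (p_kernel s a).2 mulr1.
Qed.

Lemma stdistS pi mu t s' :
  stdist p pi mu t.+1 s' = \sum_s ptrans pi s s' * stdist p pi mu t s.
Proof.
transitivity (\sum_s \sum_a stdist p pi mu t s * pi s a * p s a s') => //.
by apply: eq_bigr => s _; rewrite mulr_suml; apply: eq_bigr => a _; ring.
Qed.

Lemma stdist_linear pi mu t s' :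
  stdist p pi mu t s' = \sum_s0 mu s0 * stdist p pi (dirac_s R s0) t s'.
Proof.
elim: t s' => [|t IH] s'; first by rewrite /= sum_mul_dirac.
rewrite stdistS.
under eq_bigr do rewrite IH mulr_sumr.
rewrite exchange_big; apply: eq_bigr => s0 _.
by rewrite stdistS mulr_sumr; apply: eq_bigr => s _; ring.
Qed.

Lemma is_dist_stdist pi mu t : is_policy pi -> is_dist mu ->
  is_dist (stdist p pi mu t).
Proof.
move=> pi_policy [mu_ge0 mu_sum1]; elim: t => [|t [IH_ge0 IH_sum1]] //; split.
  move=> s'; rewrite stdistS; apply: sumr_ge0 => s _.
  by rewrite mulr_ge0 ?(is_dist_ptrans s pi_policy).1.
under eq_bigr do rewrite stdistS; rewrite exchange_big /= -IH_sum1.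
by apply: eq_bigr => s _; rewrite -mulr_suml (is_dist_ptrans s pi_policy).2 mul1r.
Qed.

Lemma norm_stdist_le1 pi mu t s : is_policy pi -> is_dist mu ->
  `|stdist p pi mu t s| <= 1.
Proof. by move=> pi_policy mu_dist; apply/norm_dist_le1/is_dist_stdist. Qed.

Lemma exp_rewardE pi mu t :
  exp_reward p r pi mu t = \sum_s stdist p pi mu t s * rpol pi s.
Proof. by apply: eq_bigr => s _; rewrite mulr_sumr; apply: eq_bigr => a _; ring. Qed.

Lemma exp_reward_linear pi mu t :
  exp_reward p r pi mu t = \sum_s0 mu s0 * exp_reward p r pi (dirac_s R s0) t.
Proof.
rewrite exp_rewardE; under eq_bigr do rewrite stdist_linear mulr_suml.
rewrite exchange_big /=; apply: eq_bigr => s0 _.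
by rewrite exp_rewardE mulr_sumr; apply: eq_bigr => s _; ring.
Qed.

Lemma norm_exp_reward_le pi mu t : is_policy pi -> is_dist mu ->
  `|exp_reward p r pi mu t| <= \sum_s \sum_a `|r s a|.
Proof.
move=> pi_policy mu_dist; apply: le_trans (ler_norm_sum _ _ _) _.
apply: ler_sum => s _; apply: le_trans (ler_norm_sum _ _ _) _.
apply: ler_sum => a _; rewrite !normrM ler_piMl //.
rewrite -[1]mulr1; apply: ler_pM => //; apply: norm_dist_le1 => //.
exact: is_dist_stdist.
Qed.

Lemma ptransB (f g : S -> A -> R) s s' :
  ptrans (fun s a => f s a - g s a) s s' = ptrans f s s' - ptrans g s s'.
Proof. by rewrite /ptrans -sumrB; apply: eq_bigr => a _; rewrite mulrBl. Qed.

Lemma l1_ptrans_le (f : S -> A -> R) (x : S -> R) :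
  \sum_s' `|\sum_s ptrans f s s' * x s| <= \sum_s (\sum_a `|f s a|) * `|x s|.
Proof.
apply: (@le_trans _ _ (\sum_s' \sum_s \sum_a `|f s a| * p s a s' * `|x s|)).
  apply: ler_sum => s' _; apply: le_trans (ler_norm_sum _ _ _) _.
  apply: ler_sum => s _; rewrite mulr_suml; apply: le_trans (ler_norm_sum _ _ _) _.
  by apply: ler_sum => a _; rewrite !normrM (ger0_norm ((p_kernel s a).1 s')).
rewrite exchange_big /=; apply: ler_sum => s _.
rewrite exchange_big /= mulr_suml; apply: ler_sum => a _.
by rewrite -mulr_suml -mulr_sumr (p_kernel s a).2 mulr1.
Qed.

End markov_chain.

Section values.
Variables (R : realType) (S A : finType) (p : S -> A -> S -> R) (r : S -> A -> R).
Variable gamma : R.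
Hypotheses (p_kernel : is_kernel p) (gamma_ge0 : 0 <= gamma) (gamma_lt1 : gamma < 1).

Local Notation dsum := (dsum gamma).
Local Notation Vf := (Vf p r gamma).
Local Notation Af := (Af p r gamma).
Local Notation Jret := (Jret p r gamma).
Local Notation dvis := (dvis p gamma).

Lemma dsum_exp_reward pi mu : is_policy pi ->
  dsum (exp_reward p r pi mu) = \sum_s mu s * Vf pi s.
Proof.
move=> pi_policy.
have -> : exp_reward p r pi mu =
    (fun t => \sum_s mu s * exp_reward p r pi (dirac_s R s) t).
  by apply/funext => t; exact: exp_reward_linear.
apply: (dsum_sum gamma_ge0 gamma_lt1) => s t.
exact: norm_exp_reward_le (is_dist_dirac _ _).
Qed.

Lemma Jret_Vf rho pi : is_policy pi -> Jret rho pi = \sum_s rho s * Vf pi s.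
Proof. exact: dsum_exp_reward. Qed.

Lemma Qf_bellman pi s a : is_policy pi ->
  Qf p r gamma pi s a = r s a + gamma * \sum_s' p s a s' * Vf pi s'.
Proof.
move=> pi_policy.
rewrite /Qf -/(dsum _) (dsumS gamma_ge0 gamma_lt1 (M := \sum_s \sum_a `|r s a|)).
  by rewrite dsum_exp_reward.
case=> [|t]; last exact: norm_exp_reward_le.
rewrite (bigD1 s) //= (bigD1 a) //= -addrA lerDl.
by rewrite addr_ge0 ?sumr_ge0 // => *; rewrite sumr_ge0.
Qed.

Lemma sum_policy_Af pi pi' s : is_policy pi -> is_policy pi' ->
  \sum_a pi s a * Af pi' s a =
  rpol r pi s + gamma * \sum_s' ptrans p pi s s' * Vf pi' s' - Vf pi' s.
Proof.
move=> pi_policy pi'_policy.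
under eq_bigr do rewrite /Af Qf_bellman //.
transitivity (rpol r pi s + gamma * \sum_a pi s a * \sum_s' p s a s' * Vf pi' s'
    - (\sum_a pi s a) * Vf pi' s).
  rewrite /rpol mulr_sumr mulr_suml -big_split -sumrB /=.
  by apply: eq_bigr => a _; ring.
rewrite (pi_policy s).2 mul1r; congr (_ + gamma * _ - _).
under [RHS]eq_bigr do rewrite mulr_suml; rewrite exchange_big.
by apply: eq_bigr => a _; rewrite mulr_sumr; apply: eq_bigr => s' _; ring.
Qed.

Lemma dvisE rho pi s :
  dvis rho pi s = (1 - gamma) * dsum (fun t => stdist p pi rho t s).
Proof. by []. Qed.

Lemma dvis_bellman rho pi s' : is_dist rho -> is_policy pi ->
  dvis rho pi s' =
  (1 - gamma) * rho s' + gamma * \sum_s ptrans p pi s s' * dvis rho pi s.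
Proof.
move=> rho_dist pi_policy.
have stdist_le1 s t := norm_stdist_le1 p_kernel t s pi_policy rho_dist.
rewrite !dvisE (dsumS gamma_ge0 gamma_lt1 (stdist_le1 s')).
under eq_fun do rewrite stdistS.
rewrite (dsum_sum gamma_ge0 gamma_lt1 _ stdist_le1) mulrDr !mulr_sumr.
by congr (_ + _); apply: eq_bigr => s _; rewrite dvisE; ring.
Qed.

Lemma dvis_ge0 rho pi s : is_dist rho -> is_policy pi -> 0 <= dvis rho pi s.
Proof.
move=> rho_dist pi_policy; rewrite dvisE.
apply: mulr_ge0; first by rewrite subr_ge0 ltW.
apply: (dsum_ge0 gamma_ge0 gamma_lt1 (M := 1)) => t.
  exact: norm_stdist_le1.
exact: (is_dist_stdist p_kernel t pi_policy rho_dist).1.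
Qed.

Lemma Jret_dvis rho pi : is_dist rho -> is_policy pi ->
  (1 - gamma) * Jret rho pi = \sum_s dvis rho pi s * rpol r pi s.
Proof.
move=> rho_dist pi_policy.
have stdist_le1 s t := norm_stdist_le1 p_kernel t s pi_policy rho_dist.
rewrite /Jret -/(dsum _).
have -> : exp_reward p r pi rho =
    (fun t => \sum_s rpol r pi s * stdist p pi rho t s).
  by apply/funext => t; rewrite exp_rewardE; apply: eq_bigr => s _; rewrite mulrC.
rewrite (dsum_sum gamma_ge0 gamma_lt1 _ stdist_le1) mulr_sumr.
by apply: eq_bigr => s _; rewrite dvisE; ring.
Qed.

Lemma performance_difference rho pi pi' :
  is_dist rho -> is_policy pi -> is_policy pi' ->
  (1 - gamma) * (Jret rho pi - Jret rho pi') =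
  \sum_s dvis rho pi s * \sum_a pi s a * Af pi' s a.
Proof.
move=> rho_dist pi_policy pi'_policy.
under [RHS]eq_bigr do rewrite sum_policy_Af //.
have flow : \sum_s dvis rho pi s * (gamma * \sum_s' ptrans p pi s s' * Vf pi' s') =
    \sum_s (dvis rho pi s - (1 - gamma) * rho s) * Vf pi' s.
  under eq_bigr do rewrite mulr_sumr mulr_sumr; rewrite exchange_big.
  apply: eq_bigr => s' _; rewrite [dvis rho pi s'](dvis_bellman _ rho_dist) //.
  by rewrite addrAC subrr add0r mulr_sumr mulr_suml; apply: eq_bigr => s _; ring.
rewrite mulrBr Jret_dvis // Jret_Vf // mulr_sumr.
rewrite [RHS](eq_bigr (fun s => dvis rho pi s * rpol r pi s +
    dvis rho pi s * (gamma * \sum_s' ptrans p pi s s' * Vf pi' s') -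
    dvis rho pi s * Vf pi' s)); last by move=> s _; ring.
rewrite sumrB big_split /= flow -addrA; congr (_ + _).
by rewrite -sumrB -sumrN; apply: eq_bigr => s _; ring.
Qed.

Lemma sum_norm_dvisB rho pi pi' :
  is_dist rho -> is_policy pi -> is_policy pi' ->
  \sum_s `|dvis rho pi s - dvis rho pi' s| <=
  gamma / (1 - gamma) * \sum_s dvis rho pi' s * \sum_a `|pi s a - pi' s a|.
Proof.
move=> rho_dist pi_policy pi'_policy.
set E := \sum_s _; set T := \sum_s _.
have dvisB s' : dvis rho pi s' - dvis rho pi' s' =
    gamma * \sum_s ptrans p pi s s' * (dvis rho pi s - dvis rho pi' s) +
    gamma * \sum_s ptrans p (fun s a => pi s a - pi' s a) s s' * dvis rho pi' s.
  rewrite [dvis rho pi s'](dvis_bellman _ rho_dist pi_policy).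
  rewrite [dvis rho pi' s'](dvis_bellman _ rho_dist pi'_policy).
  transitivity (gamma * \sum_s (ptrans p pi s s' * dvis rho pi s -
      ptrans p pi' s s' * dvis rho pi' s)); first by rewrite sumrB; ring.
  rewrite -mulrDr -big_split /=; congr (_ * _); apply: eq_bigr => s _.
  by rewrite ptransB; ring.
have E_le : E <= gamma * E + gamma * T.
  apply: (@le_trans _ _ (\sum_s' (gamma * `|\sum_s ptrans p pi s s' *
      (dvis rho pi s - dvis rho pi' s)| + gamma * `|\sum_s ptrans p
      (fun s a => pi s a - pi' s a) s s' * dvis rho pi' s|))).
    apply: ler_sum => s' _; rewrite dvisB; apply: le_trans (ler_normD _ _) _.
    by rewrite !normrM ger0_norm.
  rewrite big_split /= -!mulr_sumr lerD // ler_wpM2l //.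
    apply: le_trans (l1_ptrans_le p_kernel _ _) _; apply: ler_sum => s _.
    rewrite (eq_bigr _ (fun a _ => ger0_norm ((pi_policy s).1 a))).
    by rewrite (pi_policy s).2 mul1r.
  apply: le_trans (l1_ptrans_le p_kernel _ _) _; apply: ler_sum => s _.
  by rewrite mulrC ger0_norm ?dvis_ge0.
by rewrite mulrAC ler_pdivlMr ?subr_gt0 // mulrBr mulr1 [E * gamma]mulrC; lra.
Qed.

End values.

Section lower_bound.
Variables (R : realType) (S A : finType).
Variables (p : S -> A -> S -> R) (r : S -> A -> R) (rho0 : S -> R) (gamma : R).
Variables (pik pi piref : S -> A -> R) (C : R).
Hypotheses (p_kernel : is_kernel p) (rho_dist : is_dist rho0).
Hypotheses (gamma_ge0 : 0 <= gamma) (gamma_lt1 : gamma < 1).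
Hypotheses (pik_policy : is_policy pik) (pi_policy : is_policy pi).
Hypotheses (piref_policy : is_policy piref).
Hypothesis abs_cont : forall s a, piref s a = 0 -> pi s a = 0.
Hypothesis C_ge0 : 0 <= C.
Hypothesis adv_le : forall s, `|\sum_a pi s a * Af p r gamma pik s a| <= C.

Local Notation d := (dvis p gamma rho0 pi).
Local Notation dref := (dvis p gamma rho0 piref).
Local Notation g s := (\sum_a pi s a * Af p r gamma pik s a).

Lemma Jret_lower_bound :
  Jret p r gamma rho0 pi - Jret p r gamma rho0 pik >=
    (1 - gamma)^-1 *
      (\sum_s \sum_a dref s * piref s a *
         (pi s a / piref s a * Af p r gamma pik s a))
    - (2 * gamma * C) / (1 - gamma) ^+ 2 * (\sum_s dref s * TV pi piref s).
Proof.
have gamma1_gt0 : 0 < 1 - gamma by rewrite subr_gt0.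
have -> : \sum_s \sum_a dref s * piref s a *
    (pi s a / piref s a * Af p r gamma pik s a) = \sum_s dref s * g s.
  apply: eq_bigr => s _; rewrite -(sum_importance_weight _ (@abs_cont s)) mulr_sumr.
  by apply: eq_bigr => a _; rewrite [RHS]mulrA.
have -> : \sum_s dref s * TV pi piref s =
    2^-1 * \sum_s dref s * \sum_a `|pi s a - piref s a|.
  by rewrite mulr_sumr; apply: eq_bigr => s _; rewrite /TV mulrCA.
have -> : Jret p r gamma rho0 pi - Jret p r gamma rho0 pik =
    (1 - gamma)^-1 * \sum_s d s * g s.
  by rewrite -performance_difference // mulKf ?gt_eqF.
have change_of_measure :
    \sum_s dref s * g s - \sum_s d s * g s <= C * \sum_s `|d s - dref s|.
  rewrite -sumrB; under eq_bigr do rewrite -mulrBl.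
  apply: le_trans (ler_norm _) _; apply: le_trans (ler_abs_sum_mul _ adv_le) _.
  by under eq_bigr do rewrite distrC.
have visitation_shift := ler_wpM2l C_ge0
  (sum_norm_dvisB p_kernel gamma_ge0 gamma_lt1 rho_dist pi_policy piref_policy).
set X := \sum_s dref s * _; set P := \sum_s d s * _.
set T := \sum_s dref s * \sum_a `|_|.
have -> : (1 - gamma)^-1 * X - 2 * gamma * C / (1 - gamma) ^+ 2 * (2^-1 * T) =
    (1 - gamma)^-1 * (X - C * (gamma / (1 - gamma) * T)).
  by field; rewrite gt_eqF.
apply: ler_wpM2l; first by rewrite invr_ge0 ltW.
by rewrite /X /P /T; lra.
Qed.
End lower_bound.

Theorem lemma3 (R : realType) (S A : finType)
  (p : S -> A -> S -> R) (r : S -> A -> R) (rho0 : S -> R) (gamma : R)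
  (pik pi piref : S -> A -> R) :
  is_kernel p -> is_dist rho0 -> 0 <= gamma -> gamma < 1 ->
  is_policy pik -> is_policy pi -> is_policy piref ->
  (* the likelihood ratio pi/piref is well defined *)
  (forall s a, piref s a = 0 -> pi s a = 0) ->
  let C := \big[Num.max/0]_(s : S)
             `| \sum_(a : A) pi s a * Af p r gamma pik s a | in
  Jret p r gamma rho0 pi - Jret p r gamma rho0 pik >=
    (1 - gamma)^-1 *
      (\sum_(s : S) \sum_(a : A) dvis p gamma rho0 piref s * piref s a *
          (pi s a / piref s a * Af p r gamma pik s a))
    - (2 * gamma * C) / (1 - gamma) ^+ 2 *
      (\sum_(s : S) dvis p gamma rho0 piref s * TV pi piref s).
Proof.
move=> p_kernel rho_dist gamma_ge0 gamma_lt1 pik_policy pi_policy piref_policy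
  abs_cont.
apply: Jret_lower_bound => //; first exact: bigmax_ge_id.
by move=> s; exact: (le_bigmax _ (fun s => `|\sum_a pi s a * Af p r gamma pik s a|)).
Qed.
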